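(* Let $m$ be an even positive integer, let $q,k$ be positive integers, $n=q(k-1)+1$, and ${\bf h}\in\mathbb{R}^{qm(k-1)+1}$. Let $\mathcal{H}_m$ be the $m^{\rm th}$-order $n$-dimensional Hankel tensor and $\mathcal{H}_{qm}$ the $(qm)^{\rm th}$-order $k$-dimensional Hankel tensor, both generated by ${\bf h}$ (i.e. entries $h_{i_1+i_2+\cdots}$, indices starting at $0$). Define $c_1=\min_{0\ne{\bf y}\in\mathbb{R}^k}\|{\bf y}^{\ast q}\|_m^m/\|{\bf y}\|_{qm}^{qm}$ and $c_2=\max_{0\ne{\bf y}\in\mathbb{R}^k}\|{\bf y}^{\ast q}\|_m^m/\|{\bf y}\|_{qm}^{qm}$ (positive constants depending on $m,n,q$). Then $\lambda_{\min}(\mathcal{H}_{qm})\ge c_1\,\lambda_{\min}(\mathcal{H}_m)$ if $\mathcal{H}_{qm}$ is positive semi-definite, and $\lambda_{\min}(\mathcal{H}_{qm})\ge c_2\,\lambda_{\min}(\mathcal{H}_m)$ otherwise; and $\lambda_{\max}(\mathcal{H}_{qm})\le c_1\,\lambda_{\max}(\mathcal{H}_m)$ if $\mathcal{H}_{qm}$ is negative semi-definite, and $\lambda_{\max}(\mathcal{H}_{qm})\le c_2\,\lambda_{\max}(\mathcal{H}_m)$ otherwise.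
   Context: For ${\bf u}\in\mathbb{R}^{n_1}$, ${\bf v}\in\mathbb{R}^{n_2}$ (indexed from $0$), the convolution ${\bf u}\ast{\bf v}\in\mathbb{R}^{n_1+n_2-1}$ has entries $({\bf u}\ast{\bf v})_j=\sum_{i=0}^j u_iv_{j-i}$ (with $u_i=0$ for $i\ge n_1$, $v_i=0$ for $i\ge n_2$); ${\bf y}^{\ast q}={\bf y}\ast\cdots\ast{\bf y}$ ($q$ factors), so ${\bf y}^{\ast q}\in\mathbb{R}^{q(k-1)+1}=\mathbb{R}^n$ for ${\bf y}\in\mathbb{R}^k$. $\|\cdot\|_p$ is the $\ell_p$-norm. For a real $m^{\rm th}$-order $n$-dimensional tensor $\mathcal{T}$, $(\mathcal{T}{\bf x}^{m-1})_i=\sum_{i_2,\dots,i_m}\mathcal{T}_{i i_2\dots i_m}x_{i_2}\cdots x_{i_m}$; a real $\lambda$ is an H-eigenvalue if there is nonzero ${\bf x}\in\mathbb{R}^n$ with $\mathcal{T}{\bf x}^{m-1}=\lambda{\bf x}^{[m-1]}$, where ${\bf x}^{[m-1]}=(x_1^{m-1},\dots,x_n^{m-1})^\top$. $\lambda_{\min}(\cdot)$, $\lambda_{\max}(\cdot)$ denote the smallest and largest H-eigenvalue. An even-order tensor is positive (negative) semi-definite if $\mathcal{T}{\bf x}^m\ge0$ ($\le 0$) for all real ${\bf x}$, where $\mathcal{T}{\bf x}^m=\sum\mathcal{T}_{i_1\dots i_m}x_{i_1}\cdots x_{i_m}$. *)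

From HB Require Import structures.
From mathcomp Require Import all_boot all_order all_algebra.
From mathcomp Require Import reals.
Set Implicit Arguments. Unset Strict Implicit. Unset Printing Implicit Defensive.
Import Order.TTheory GRing.Theory Num.Theory.
Local Open Scope ring_scope.

(* A real tensor of dimension n is represented by its entry function on
   index sequences (indices in 'I_n, starting at 0); an m-th order tensor
   only uses sequences of length m. *)
Definition tensor (R : realType) (n : nat) := seq 'I_n -> R.

Definition tapply (R : realType) (n m : nat) (T : tensor R n) (x : 'rV[R]_n)
  (i : 'I_n) : R :=
  \sum_(t : (m.-1).-tuple 'I_n) T (i :: tval t) * \prod_(j <- tval t) x 0 j.

Definition tform (R : realType) (n m : nat) (T : tensor R n) (x : 'rV[R]_n) : R :=
  \sum_(t : m.-tuple 'I_n) T (tval t) * \prod_(j <- tval t) x 0 j.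

Definition H_eigenvalue (R : realType) (n m : nat) (T : tensor R n) (l : R) : Prop :=
  exists x : 'rV[R]_n, x != 0 /\ forall i, tapply m T x i = l * (x 0 i) ^+ m.-1.

Definition is_min_H_eigenvalue (R : realType) (n m : nat) (T : tensor R n) (l : R) :=
  H_eigenvalue m T l /\ forall l', H_eigenvalue m T l' -> l <= l'.

Definition is_max_H_eigenvalue (R : realType) (n m : nat) (T : tensor R n) (l : R) :=
  H_eigenvalue m T l /\ forall l', H_eigenvalue m T l' -> l' <= l.

Definition psd_tensor (R : realType) (n m : nat) (T : tensor R n) : Prop :=
  forall x : 'rV[R]_n, 0 <= tform m T x.

Definition nsd_tensor (R : realType) (n m : nat) (T : tensor R n) : Prop :=
  forall x : 'rV[R]_n, tform m T x <= 0.

(* Hankel tensor (of dimension n) generated by h: entries h_{i1 + ... + im}.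
   (For an m-th order n-dim tensor with h of length m(n-1)+1 the index
   sum is always in range, so inord is exact on the relevant entries.) *)
Definition hankel (R : realType) (N n : nat) (h : 'rV[R]_N.+1) : tensor R n :=
  fun s => h 0 (inord (sumn (map (@nat_of_ord n) s))).

Definition vext (R : realType) (k : nat) (y : 'rV[R]_k) (j : nat) : R :=
  match insub j with Some i => y 0 i | None => 0 end.

Definition conv (R : realType) (u v : nat -> R) (j : nat) : R :=
  \sum_(i < j.+1) u i * v (j - i)%N.

Definition convpow (R : realType) (k : nat) (y : 'rV[R]_k) (q : nat) : nat -> R :=
  iter q.-1 (conv (vext y)) (vext y).

Definition conv_ratio (R : realType) (m q k : nat) (y : 'rV[R]_k) : R :=
  (\sum_(j < q * (k - 1) + 1) `|convpow y q j| ^+ m)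
  / (\sum_(i < k) `|y 0 i| ^+ (q * m)).

Definition is_min_ratio (R : realType) (m q k : nat) (c : R) : Prop :=
  (exists2 y : 'rV[R]_k, y != 0 & c = conv_ratio m q y) /\
  forall y : 'rV[R]_k, y != 0 -> c <= conv_ratio m q y.

Definition is_max_ratio (R : realType) (m q k : nat) (c : R) : Prop :=
  (exists2 y : 'rV[R]_k, y != 0 & c = conv_ratio m q y) /\
  forall y : 'rV[R]_k, y != 0 -> conv_ratio m q y <= c.

Arguments hankel {R N} n h _.

(** For a Hankel tensor generated by [h], the form [H x^M] is the moment functional
    [p |-> sum_s h_s p_s] applied to [p_x^M], where [p_x] is the polynomial with
    coefficient vector [x]. As [p_(y^{*q}) = p_y^q], this gives
    [H_qm y^(qm) = H_m (y^{*q})^m]. For even [M] the smallest H-eigenvalue of [H_M]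
    is a lower bound of the Rayleigh quotient [H_M x^M / sum_i x_i^M]: a minimiser on
    the unit sphere exists by compactness, and the first-order condition along each
    coordinate axis makes it an H-eigenvector. Evaluating at an H-eigenvector [y] of
    [H_qm] for its smallest H-eigenvalue yields
    [lambda_min(H_qm) >= lambda_min(H_m) * ||y^{*q}||_m^m / ||y||_qm^qm], a ratio lying
    in [[c1, c2]]; the sign of [lambda_min(H_m)] picks the constant. The bounds on
    [lambda_max] are those on [lambda_min] for the tensors generated by [-h]. *)

From HB Require Import structures.
From mathcomp Require Import all_boot all_order all_algebra.
From mathcomp Require Import ring lra zify.
From mathcomp Require Import all_classical all_reals all_analysis.
Set Implicit Arguments. Unset Strict Implicit. Unset Printing Implicit Defensive.
Import Order.TTheory GRing.Theory Num.Theory.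
Import numFieldTopology.Exports numFieldNormedType.Exports.
Local Open Scope ring_scope.

Lemma big_tuple_cons (V : nmodType) (T : finType) L (F : L.+1.-tuple T -> V) :
  \sum_(t : L.+1.-tuple T) F t = \sum_(x : T) \sum_(t : L.-tuple T) F [tuple of x :: t].
Proof.
rewrite pair_big /= (reindex (fun p : T * L.-tuple T => [tuple of p.1 :: p.2])) //=.
exists (fun t => (thead t, [tuple of behead t])) => [[x t] _ | t _] /=.
  by congr (_, _); apply: val_inj.
by rewrite [RHS]tuple_eta; apply: val_inj.
Qed.

Section Moment.
Variables (R : realType) (phi : nat -> R).

Definition moment (p : {poly R}) : R := \sum_(s < size p) phi s * p`_s.

Lemma momentE (p : {poly R}) B :
  (size p <= B)%N -> moment p = \sum_(s < B) phi s * p`_s.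
Proof.
move=> pB; rewrite /moment -!(big_mkord xpredT (fun s => phi s * p`_s)).
rewrite (big_cat_nat (leq0n _) pB) /= [X in _ + X]big1_seq ?addr0 //.
by move=> s /andP[_]; rewrite mem_index_iota => /andP[ps _]; rewrite nth_default ?mulr0.
Qed.

Lemma moment0 : moment 0 = 0.
Proof. by rewrite /moment size_poly0 big_ord0. Qed.

Lemma momentD (p r : {poly R}) : moment (p + r) = moment p + moment r.
Proof.
pose B := maxn (size p) (size r).
rewrite (@momentE _ B) ?(@momentE p B) ?(@momentE r B) ?leq_maxl ?leq_maxr //.
  by rewrite -big_split; apply: eq_bigr => s _; rewrite coefD mulrDr.
exact: size_polyD.
Qed.

Lemma momentZ a (p : {poly R}) : moment (a *: p) = a * moment p.
Proof.
rewrite (@momentE _ (size p)) ?size_scale_leq // /moment mulr_sumr.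
by apply: eq_bigr => s _; rewrite coefZ mulrCA.
Qed.

HB.instance Definition _ :=
  GRing.isNmodMorphism.Build {poly R} R moment (moment0, momentD).
HB.instance Definition _ :=
  GRing.isScalable.Build R {poly R} R *%R moment momentZ.

End Moment.

Section MomentProduct.
Variable R : realType.
Implicit Types (phi : nat -> R).

Lemma moment_XnM phi i (p : {poly R}) :
  moment phi ('X^i * p) = moment (phi \o addn i) p.
Proof.
rewrite (@momentE _ _ _ (i + size p)); last first.
  by rewrite (leq_trans (size_polyMleq _ _)) // size_polyXn addSn.
rewrite big_split_ord /= big1 ?add0r => [|s _]; last by rewrite coefXnM ltn_ord mulr0.
by apply: eq_bigr => s _; rewrite coefXnM ltnNge leq_addr addKn.
Qed.

Lemma momentM phi N (p r : {poly R}) : (size p <= N)%N ->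
  moment phi (p * r) = \sum_(i < N) p`_i * moment (phi \o addn i) r.
Proof.
move=> pN; have pE : p = \poly_(i < N) p`_i.
  apply/polyP => j; rewrite coef_poly.
  by case: ltnP => // Nj; rewrite nth_default ?(leq_trans pN).
rewrite [in LHS]pE poly_def mulr_suml raddf_sum; apply: eq_bigr => i _ /=.
by rewrite -scalerAl momentZ moment_XnM.
Qed.

End MomentProduct.

Section GeneratingPolynomial.
Variable R : realType.

Lemma vextE N (x : 'rV[R]_N) (j : 'I_N) : vext x j = x 0 j.
Proof. by rewrite /vext valK. Qed.

Lemma vextD N (x y : 'rV[R]_N) j : vext (x + y) j = vext x j + vext y j.
Proof. by rewrite /vext; case: insub => [a|] /=; rewrite ?mxE ?addr0. Qed.

Lemma vextZ N a (x : 'rV[R]_N) j : vext (a *: x) j = a * vext x j.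
Proof. by rewrite /vext; case: insub => [b|] /=; rewrite ?mxE ?mulr0. Qed.

Definition gen_poly N (x : 'rV[R]_N) : {poly R} := \poly_(i < N) vext x i.

Lemma coef_gen_poly N (x : 'rV[R]_N) j : (gen_poly x)`_j = vext x j.
Proof.
rewrite coef_poly; case: ltnP => // Nj.
by rewrite /vext insubF // ltnNge Nj.
Qed.

Lemma size_gen_poly N (x : 'rV[R]_N) : (size (gen_poly x) <= N)%N.
Proof. exact: size_poly. Qed.

Lemma gen_polyD N (x y : 'rV[R]_N) : gen_poly (x + y) = gen_poly x + gen_poly y.
Proof. by apply/polyP => j; rewrite coefD !coef_gen_poly vextD. Qed.

Lemma gen_polyZ N a (x : 'rV[R]_N) : gen_poly (a *: x) = a *: gen_poly x.
Proof. by apply/polyP => j; rewrite coefZ !coef_gen_poly vextZ. Qed.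

Lemma gen_poly_delta N (i : 'I_N) : gen_poly (delta_mx 0 i) = 'X^i.
Proof.
apply/polyP => j; rewrite coef_gen_poly coefXn /vext.
case: insubP => [a _ <-|Nj] /=; first by rewrite mxE eqxx.
by case: eqP => // ji; rewrite ji ltn_ord in Nj.
Qed.

End GeneratingPolynomial.

Section HankelForms.
Variable R : realType.
Implicit Types (phi : nat -> R).

Definition hankel_seq n phi : tensor R n :=
  fun s => phi (sumn (map (@nat_of_ord n) s)).
Arguments hankel_seq n phi _ : clear implicits.

Lemma sum_tuple_moment N (x : 'rV[R]_N) phi L :
  \sum_(t : L.-tuple 'I_N) phi (sumn (map (@nat_of_ord N) t)) * \prod_(j <- t) x 0 j
  = moment phi (gen_poly x ^+ L).
Proof.
elim: L phi => [|L IHL] phi.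
  rewrite (big_pred1 [tuple]) => [|t]; last by apply/esym/eqP; exact: tuple0.
  by rewrite expr0 /moment size_poly1 big_ord1 coefC big_nil.
rewrite big_tuple_cons exprS (momentM _ _ (size_gen_poly x)).
apply: eq_bigr => i _; rewrite -IHL mulr_sumr; apply: eq_bigr => t _ /=.
rewrite big_cons coef_gen_poly vextE; ring.
Qed.

Lemma tform_hankel_seq n M phi (x : 'rV[R]_n) :
  tform M (hankel_seq n phi) x = moment phi (gen_poly x ^+ M).
Proof. exact: sum_tuple_moment. Qed.

Lemma tapply_hankel_seq n M phi (x : 'rV[R]_n) i :
  tapply M (hankel_seq n phi) x i = moment (phi \o addn i) (gen_poly x ^+ M.-1).
Proof. exact: sum_tuple_moment. Qed.

Lemma tform_hankel_seqZ n M phi a (x : 'rV[R]_n) :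
  tform M (hankel_seq n phi) (a *: x) = a ^+ M * tform M (hankel_seq n phi) x.
Proof. by rewrite !tform_hankel_seq gen_polyZ exprZn momentZ. Qed.

Definition power_sum n M (x : 'rV[R]_n) : R := \sum_(j < n) x 0 j ^+ M.

Lemma tform_tapply n M (T : tensor R n) (x : 'rV[R]_n) : (0 < M)%N ->
  tform M T x = \sum_(i < n) x 0 i * tapply M T x i.
Proof.
case: M => // M _; rewrite /tform big_tuple_cons; apply: eq_bigr => i _.
by rewrite /tapply mulr_sumr; apply: eq_bigr => t _; rewrite big_cons mulrCA.
Qed.

Lemma tform_H_eigen n M (T : tensor R n) (x : 'rV[R]_n) l : (0 < M)%N ->
  (forall i, tapply M T x i = l * x 0 i ^+ M.-1) -> tform M T x = l * power_sum M x.
Proof.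
move=> M0 xl; rewrite tform_tapply // /power_sum mulr_sumr; apply: eq_bigr => i _.
by rewrite xl mulrCA -exprS prednK.
Qed.

Lemma tform_hankel_seq_line n M phi (c : 'rV[R]_n) i t :
  tform M (hankel_seq n phi) (c + t *: delta_mx 0 i)
  = \sum_(k < M.+1)
      moment phi (gen_poly c ^+ (M - k) * 'X^(i * k)) * t ^+ k *+ 'C(M, k).
Proof.
rewrite tform_hankel_seq gen_polyD gen_polyZ gen_poly_delta exprDn raddf_sum.
apply: eq_bigr => k _ /=.
by rewrite raddfMn /= exprZn -scalerAr momentZ -exprM mulrC.
Qed.

Lemma power_sum_line n M (c : 'rV[R]_n) i t :
  power_sum M (c + t *: delta_mx 0 i)
  = power_sum M c - c 0 i ^+ M
    + \sum_(k < M.+1) c 0 i ^+ (M - k) * t ^+ k *+ 'C(M, k).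
Proof.
rewrite /power_sum (bigD1 i) //= [in RHS](bigD1 i) //= -exprDn !mxE !eqxx mulr1.
rewrite (eq_bigr (fun j => c 0 j ^+ M)) => [|j ji]; first by ring.
by rewrite !mxE eqxx (negbTE ji) mulr0 addr0.
Qed.

Lemma first_coef_eq0_of_ge0 (b : nat -> R) K :
  (forall t, 0 <= \sum_(k < K.+1) b k * t ^+ k.+1) -> b 0%N = 0.
Proof.
move=> ge0; apply/eqP/negPn/negP => b0.
pose S := \sum_(k < K) `|b k.+1|.
pose D := `|b 0%N| + S.
have S0 : 0 <= S by apply: sumr_ge0.
have D0 : 0 < D by rewrite ltr_wpDr // normr_gt0.
(* At [t = - b_0 / D] the linear term outweighs the others, which are at most
   [t^2 S] for [|t| <= 1]. *)
pose t := - b 0%N / D.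
have t1 : `|t| <= 1.
  by rewrite normrM normrN normfV (gtr0_norm D0) ler_pdivrMr // mul1r lerDl.
have rest_le : \sum_(k < K) b k.+1 * t ^+ k.+2 <= t ^+ 2 * S.
  apply: le_trans (ler_norm _) _; apply: le_trans (ler_norm_sum _ _ _) _.
  rewrite mulr_sumr; apply: ler_sum => k _; rewrite normrM normrX mulrC ler_wpM2r //.
  rewrite -addn2 exprD (real_normK (num_real t)) ler_piMl ?sqr_ge0 //.
  by rewrite exprn_ile1 ?normr_ge0.
have : 0 <= b 0%N * t + t ^+ 2 * S.
  have := ge0 t; rewrite big_ord_recl expr1 => /le_trans; apply.
  by rewrite lerD2l.
have -> : b 0%N * t + t ^+ 2 * S = - (b 0%N ^+ 2 * `|b 0%N|) / D ^+ 2.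
  by rewrite /t /D; field; rewrite -/D gt_eqF.
rewrite mulNr oppr_ge0 leNgt => /negP; apply.
by rewrite divr_gt0 ?exprn_gt0 // mulr_gt0 ?normr_gt0 // exprn_even_gt0.
Qed.

Lemma rayleigh_min_H_eigen n M phi (c : 'rV[R]_n) l : (0 < M)%N ->
  (forall u, l * power_sum M u <= tform M (hankel_seq n phi) u) ->
  l * power_sum M c = tform M (hankel_seq n phi) c ->
  forall i, tapply M (hankel_seq n phi) c i = l * c 0 i ^+ M.-1.
Proof.
case: M => // M _ lmin lc i.
(* Along [c + t e_i] the form minus [l] times the power sum is a nonnegative
   polynomial in [t] vanishing at [0]; its linear coefficient is
   [M * (tapply_i c - l c_i^(M-1))]. *)
pose P k := moment phi (gen_poly c ^+ (M.+1 - k) * 'X^(i * k)).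
pose b k := (P k - l * c 0 i ^+ (M.+1 - k)) *+ 'C(M.+1, k).
have line_diff t : tform M.+1 (hankel_seq n phi) (c + t *: delta_mx 0 i)
    - l * power_sum M.+1 (c + t *: delta_mx 0 i) = \sum_(k < M.+1) b k.+1 * t ^+ k.+1.
  have P0 : P 0%N = tform M.+1 (hankel_seq n phi) c.
    by rewrite /P muln0 expr0 mulr1 subn0 tform_hankel_seq.
  rewrite tform_hankel_seq_line power_sum_line.
  have -> : \sum_(k < M.+2) P k * t ^+ k *+ 'C(M.+1, k)
      = \sum_(k < M.+2) b k * t ^+ k
        + l * \sum_(k < M.+2) c 0 i ^+ (M.+1 - k) * t ^+ k *+ 'C(M.+1, k).
    rewrite mulr_sumr -big_split; apply: eq_bigr => k _ /=.
    by rewrite /b mulrnBl mulrBl -!mulrnAl; ring.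
  rewrite big_ord_recl {1}/b subn0 bin0 mulr1n P0 -lc.
  under eq_bigr => k _ do rewrite lift0.
  ring.
have : b 1%N = 0.
  apply: (@first_coef_eq0_of_ge0 (fun k => b k.+1) M) => t.
  by rewrite -line_diff subr_ge0.
rewrite /b bin1 /= => /eqP; rewrite mulrn_eq0 /= subr_eq0 subn1 => /eqP <-.
by rewrite /P subn1 muln1 mulrC moment_XnM tapply_hankel_seq.
Qed.

End HankelForms.

Arguments hankel_seq {R} n phi _.

Section RayleighQuotient.
Variable R : realType.
Implicit Types (phi : nat -> R).

Lemma power_sum_ge0 n M (u : 'rV[R]_n) : ~~ odd M -> 0 <= power_sum M u.
Proof. by move=> Mev; apply: sumr_ge0 => j _; exact: exprn_even_ge0. Qed.

Lemma power_sum_gt0 n M (u : 'rV[R]_n) : ~~ odd M -> u != 0 -> 0 < power_sum M u.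
Proof.
move=> Mev u0; have [j uj0] : exists j, u 0 j != 0.
  apply/not_existsP => u_eq0; move/eqP: u0; apply; apply/matrixP => a b.
  by rewrite (ord1 a) !mxE; apply/eqP/negPn/negP; exact: u_eq0.
rewrite /power_sum (bigD1 j) //= ltr_wpDr ?exprn_even_gt0 ?uj0 ?orbT //.
by apply: sumr_ge0 => i _; exact: exprn_even_ge0.
Qed.

Lemma power_sumZ n M a (u : 'rV[R]_n) : power_sum M (a *: u) = a ^+ M * power_sum M u.
Proof. by rewrite /power_sum mulr_sumr; apply: eq_bigr => j _; rewrite mxE exprMn. Qed.

Lemma continuous_prod_coord n (s : seq 'I_n) :
  continuous (fun u : 'rV[R]_n => \prod_(j <- s) u 0 j).
Proof.
by apply: continuous_big => [|j _]; [exact: mul_continuous | exact: coord_continuous].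
Qed.

Lemma continuous_tform n M (T : tensor R n) : continuous (tform M T).
Proof.
apply: continuous_big => [|t _ x]; first exact: add_continuous.
by apply: continuousM; [exact: cst_continuous | exact: continuous_prod_coord].
Qed.

Lemma continuous_power_sum n M : continuous (@power_sum R n M).
Proof.
apply: continuous_big => [|j _ x]; first exact: add_continuous.
apply: (@continuous_comp _ _ _ (fun u : 'rV[R]_n => u 0 j) (fun r : R => r ^+ M)).
  exact: coord_continuous.
exact: exprn_continuous.
Qed.

Lemma exists_H_eigenvalue_rayleigh_bound n M phi : (0 < M)%N -> ~~ odd M ->
  exists2 l : R, H_eigenvalue M (hankel_seq n.+1 phi) l &
    forall u : 'rV[R]_n.+1, l * power_sum M u <= tform M (hankel_seq n.+1 phi) u.
Proof.
move=> M0 Mev; pose f := tform M (hankel_seq n.+1 phi).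
pose S := [set u : 'rV[R]_n.+1 | `|u| = 1]%classic.
pose rho u := f u / power_sum M u.
have S_neq0 u : S u -> u != 0.
  rewrite /S /= => u1; apply: contra_eq_neq u1 => ->.
  by rewrite normr0 eq_sym oner_neq0.
have S_nonempty : (S !=set0)%classic.
  pose v : 'rV[R]_n.+1 := const_mx 1.
  have v0 : v != 0.
    by apply/eqP => /matrixP /(_ 0 0); rewrite !mxE => /eqP; rewrite oner_eq0.
  by exists (`|v|^-1 *: v); rewrite /S /= normfZV.
have S_compact : compact S.
  apply: bounded_closed_compact.
    by exists 1; split => // r r1 u Su /=; rewrite Su ltW.
  have norm_cont : continuous (fun u : 'rV[R]_n.+1 => `|u|) := @norm_continuous _ _.
  have closed1 : closed [set r : R | r = 1]%classic by apply: closed_eq.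
  exact: (proj1 (continuous_closedP _) norm_cont _ closed1).
have rho_cont : {within S, continuous rho}%classic.
  apply: continuous_in_subspaceT => u /set_mem Su.
  apply: continuousM; first exact: continuous_tform.
  apply: (@cvgV _ _ (nbhs u) _ (power_sum M) (power_sum M u)).
    by rewrite gt_eqF // power_sum_gt0 // S_neq0.
  exact: continuous_power_sum.
have [c /set_mem Sc cmin] := compact_EVT_min S_nonempty S_compact rho_cont.
have gc0 : 0 < power_sum M c by rewrite power_sum_gt0 // S_neq0.
have rho_le u : rho c * power_sum M u <= f u.
  have [->|u0] := eqVneq u 0.
    rewrite -(scale0r 0) power_sumZ /f tform_hankel_seqZ expr0n gtn_eqF //.
    by rewrite !mul0r mulr0.
  have Su : S (`|u|^-1 *: u) by rewrite /S /= normfZV.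
  move: (cmin _ (mem_set Su)).
  rewrite /rho /f tform_hankel_seqZ power_sumZ invfM mulrACA.
  rewrite divff ?expf_neq0 ?invr_eq0 ?normr_eq0 // mul1r ler_pdivlMr //.
  by rewrite power_sum_gt0.
exists (rho c) => //; exists c; split; first exact: S_neq0.
by apply: rayleigh_min_H_eigen; rewrite // /rho divfK // gt_eqF.
Qed.

Lemma min_H_eigenvalue_rayleigh_bound n M phi l : (0 < M)%N -> ~~ odd M ->
  is_min_H_eigenvalue M (hankel_seq n.+1 phi) l ->
  forall u : 'rV[R]_n.+1, l * power_sum M u <= tform M (hankel_seq n.+1 phi) u.
Proof.
move=> M0 Mev [_ lmin] u.
have [l0 l0_eigen l0_bound] := exists_H_eigenvalue_rayleigh_bound n phi M0 Mev.
by apply: le_trans (l0_bound u); rewrite ler_wpM2r ?power_sum_ge0 ?lmin.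
Qed.

End RayleighQuotient.

Section Negation.
Variable R : realType.

Lemma tapplyN n M (T : tensor R n) x i :
  tapply M (fun s => - T s) x i = - tapply M T x i.
Proof. by rewrite /tapply -sumrN; apply: eq_bigr => t _; rewrite mulNr. Qed.

Lemma tformN n M (T : tensor R n) x : tform M (fun s => - T s) x = - tform M T x.
Proof. by rewrite /tform -sumrN; apply: eq_bigr => t _; rewrite mulNr. Qed.

Lemma H_eigenvalueN n M (T : tensor R n) l :
  H_eigenvalue M (fun s => - T s) l <-> H_eigenvalue M T (- l).
Proof.
split=> -[x [x0 xl]]; exists x; split=> // i; move: (xl i); rewrite tapplyN.
  by move/eqP; rewrite eqr_oppLR -mulNr => /eqP.
by move=> ->; rewrite mulNr opprK.
Qed.

Lemma is_max_H_eigenvalueN n M (T : tensor R n) l :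
  is_max_H_eigenvalue M T l -> is_min_H_eigenvalue M (fun s => - T s) (- l).
Proof.
move=> [lT lmax]; split; first by rewrite H_eigenvalueN opprK.
by move=> l' /H_eigenvalueN /lmax; rewrite lerNl.
Qed.

Lemma nsd_psdN n M (T : tensor R n) : nsd_tensor M T <-> psd_tensor M (fun s => - T s).
Proof.
by split=> T_sd x; [rewrite tformN oppr_ge0 | rewrite -oppr_ge0 -tformN].
Qed.

End Negation.

Section Convolution.
Variable R : realType.

Lemma convpowE k (y : 'rV[R]_k) q j :
  (0 < q)%N -> convpow y q j = (gen_poly y ^+ q)`_j.
Proof.
case: q => // q _; rewrite /convpow /=.
elim: q j => [|q IHq] j; first by rewrite expr1 coef_gen_poly.
by rewrite iterS /conv exprS coefM; apply: eq_bigr => i _; rewrite IHq coef_gen_poly.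
Qed.

Definition convpow_vec q k (y : 'rV[R]_k) : 'rV[R]_(q * (k - 1)).+1 :=
  \row_j convpow y q j.

Lemma gen_poly_convpow_vec q k (y : 'rV[R]_k) : (0 < q)%N ->
  gen_poly (convpow_vec q y) = gen_poly y ^+ q.
Proof.
move=> q0; apply/polyP => j; rewrite coef_gen_poly /vext.
case: insubP => [a _ <-|qkj].
  by rewrite mxE convpowE.
rewrite nth_default //; apply: leq_trans (size_poly_exp_leq _ _) _.
by have := size_gen_poly y; rewrite -ltnNge in qkj; nia.
Qed.

Lemma tform_hankel_seq_convpow phi m q k (y : 'rV[R]_k) : (0 < q)%N ->
  tform (q * m) (hankel_seq k phi) y
  = tform m (hankel_seq (q * (k - 1)).+1 phi) (convpow_vec q y).
Proof. by move=> q0; rewrite !tform_hankel_seq gen_poly_convpow_vec // exprM. Qed.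

Lemma conv_ratio_ge0 m q k (y : 'rV[R]_k) : 0 <= conv_ratio m q y.
Proof. by rewrite divr_ge0 // sumr_ge0 // => j _; rewrite exprn_ge0. Qed.

Lemma conv_ratioE m q k (y : 'rV[R]_k) : ~~ odd m ->
  conv_ratio m q y = power_sum m (convpow_vec q y) / power_sum (q * m) y.
Proof.
move=> mev; have qmev : ~~ odd (q * m) by rewrite oddM negb_and mev orbT.
have normX_even (a : R) M : ~~ odd M -> `|a| ^+ M = a ^+ M.
  by move=> Mev; rewrite -normrX ger0_norm //; exact: exprn_even_ge0.
rewrite /conv_ratio /power_sum addn1; congr (_ / _); apply: eq_bigr => j _.
  by rewrite mxE normX_even.
by rewrite normX_even.
Qed.

End Convolution.

Lemma hankel_min_H_eigenvalue_bound (R : realType) (phi : nat -> R)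
    m q k c1 c2 lm lq :
  (0 < m)%N -> ~~ odd m -> (0 < q)%N ->
  is_min_ratio m q k c1 -> is_max_ratio m q k c2 ->
  is_min_H_eigenvalue m (hankel_seq (q * (k - 1)).+1 phi) lm ->
  is_min_H_eigenvalue (q * m) (hankel_seq k phi) lq ->
  (psd_tensor (q * m) (hankel_seq k phi) -> c1 * lm <= lq) /\
  (~ psd_tensor (q * m) (hankel_seq k phi) -> c2 * lm <= lq).
Proof.
move=> m0 mev q0 [[y1 _ ->] c1_min] [_ c2_max] Hm [[y [y0 ey]] _].
have qm0 : (0 < q * m)%N by rewrite muln_gt0 q0.
have qmev : ~~ odd (q * m) by rewrite oddM negb_and mev orbT.
have rayleigh := min_H_eigenvalue_rayleigh_bound m0 mev Hm.
have gy : 0 < power_sum (q * m) y by exact: power_sum_gt0.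
have y_form := tform_H_eigen qm0 ey.
have ratio_le : lm * conv_ratio m q y <= lq.
  rewrite -(ler_pM2r gy) -y_form tform_hankel_seq_convpow // -mulrA.
  by rewrite conv_ratioE // divfK ?gt_eqF.
have c1_ge0 := conv_ratio_ge0 m q y1.
have c1_le := c1_min y y0; have le_c2 := c2_max y y0.
split=> [psd | npsd].
  have lq_ge0 : 0 <= lq by rewrite -(pmulr_lge0 _ gy) -y_form.
  have [lm_ge0|lm_lt0] := lerP 0 lm; nra.
have [lm_ge0|lm_lt0] := lerP 0 lm; last by nra.
case: npsd => x; rewrite tform_hankel_seq_convpow //.
by apply: le_trans (rayleigh _); rewrite mulr_ge0 ?power_sum_ge0.
Qed.

Theorem theorem2 (R : realType) (m q k n : nat)
  (hm0 : (0 < m)%N) (hmeven : ~~ odd m) (hq0 : (0 < q)%N) (hk0 : (0 < k)%N)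
  (hn : n = (q * (k - 1) + 1)%N)
  (h : 'rV[R]_(q * m * (k - 1)).+1)
  (c1 c2 : R)
  (hc1 : is_min_ratio m q k c1) (hc2 : is_max_ratio m q k c2)
  (lmin_m lmin_qm lmax_m lmax_qm : R)
  (Hlmin_m : is_min_H_eigenvalue m (hankel n h) lmin_m)
  (Hlmin_qm : is_min_H_eigenvalue (q * m) (hankel k h) lmin_qm)
  (Hlmax_m : is_max_H_eigenvalue m (hankel n h) lmax_m)
  (Hlmax_qm : is_max_H_eigenvalue (q * m) (hankel k h) lmax_qm) :
  (psd_tensor (q * m) (hankel k h) -> c1 * lmin_m <= lmin_qm) /\
  (~ psd_tensor (q * m) (hankel k h) -> c2 * lmin_m <= lmin_qm) /\
  (nsd_tensor (q * m) (hankel k h) -> lmax_qm <= c1 * lmax_m) /\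
  (~ nsd_tensor (q * m) (hankel k h) -> lmax_qm <= c2 * lmax_m).
Proof.
rewrite addn1 in hn; subst n.
pose phi s := h 0 (inord s).
(* [hankel n h] is [hankel_seq n phi] by definition. *)
have [psd_min npsd_min] :=
  @hankel_min_H_eigenvalue_bound _ phi _ _ _ _ _ _ _
    hm0 hmeven hq0 hc1 hc2 Hlmin_m Hlmin_qm.
have [psd_max npsd_max] :=
  @hankel_min_H_eigenvalue_bound _ (fun s => - phi s) _ _ _ _ _ _ _
    hm0 hmeven hq0 hc1 hc2 (is_max_H_eigenvalueN Hlmax_m) (is_max_H_eigenvalueN Hlmax_qm).
do 2!split => //; split=> [nsd | nnsd].
  by rewrite -lerN2 -mulrN; apply: psd_max; rewrite -nsd_psdN.
by rewrite -lerN2 -mulrN; apply: npsd_max; rewrite -nsd_psdN.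
Qed.
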